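(* Let $\alpha$ be a unit-speed curve in $\mathbb{R}^3$ with arc length $s$, nonvanishing curvature $\kappa$ and torsion $\tau$. Let $\alpha_T$ be its tangent indicatrix, with arc length $s_T=\int\kappa\,ds$, and let $\beta$ be a Mannheim-direction curve of $\alpha_T$ (an $X$-direction curve of $\alpha_T$ with $N_\beta=B_T$). Then there is a function $\psi(s)$ with $\frac{d\psi}{ds}=\sqrt{\kappa^2+\tau^2}$ such that, at corresponding parameter values, $$\frac{\tau_\beta}{\kappa_\beta}=\tan\psi.$$ Moreover, $$\frac{\kappa_\beta^2}{(\kappa_\beta^2+\tau_\beta^2)^{3/2}}\,\frac{d}{ds_T}\Big(\frac{\tau_\beta}{\kappa_\beta}\Big)=\mp\,\frac{1}{\dfrac{\kappa^2}{(\kappa^2+\tau^2)^{3/2}}\Big(\dfrac{\tau}{\kappa}\Big)'},$$ that is, the two sides agree up to sign. Here $'=d/ds$.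
   Context: Let $\alpha:I\subset\mathbb{R}\to\mathbb{R}^3$ be a unit-speed curve with arc length $s$, curvature $\kappa>0$, torsion $\tau$ and Frenet frame $\{T,N,B\}$. Put $f=\tau/\kappa$ and $\sigma=\frac{\kappa^2}{(\kappa^2+\tau^2)^{3/2}}(\tau/\kappa)'$. The tangent indicatrix of $\alpha$ is the curve $\alpha_T=T$ on the unit sphere. Its arc length is $s_T=\int\kappa\,ds$, so parameters $s$ and $s_T(s)$ correspond. Its Frenet apparatus is $\{T_T,N_T,B_T,\kappa_T,\tau_T\}$, with $\frac{dT_T}{ds_T}=\kappa_TN_T$, $\frac{dN_T}{ds_T}=-\kappa_TT_T+\tau_TB_T$ and $\frac{dB_T}{ds_T}=-\tau_TN_T$. It is known that $\kappa_T=\sqrt{1+f^2}$ and $\tau_T=\sigma\sqrt{1+f^2}$. Let $x,y,z$ be real functions of $s_T$ with $x^2+y^2+z^2=1$, and set $X=xT_T+yN_T+zB_T$. An integral curve $\beta$ of $X$, meaning $d\beta/ds_T=X$, is an $X$-direction curve of $\alpha_T$. It is regarded as a unit-speed Frenet curve with frame $\{T_\beta=X,N_\beta,B_\beta\}$, curvature $\kappa_\beta>0$ and torsion $\tau_\beta$. $\beta$ is a Mannheim-direction curve of $\alpha_T$ if $N_\beta=B_T$. *)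

From Stdlib Require Import Reals.
From Coquelicot Require Import Coquelicot.
Open Scope R_scope.

Record vec := mkV { v1 : R ; v2 : R ; v3 : R }.

Definition vadd (a b : vec) : vec := mkV (v1 a + v1 b) (v2 a + v2 b) (v3 a + v3 b).
Definition vscal (k : R) (a : vec) : vec := mkV (k * v1 a) (k * v2 a) (k * v3 a).
Definition dot (a b : vec) : R := v1 a * v1 b + v2 a * v2 b + v3 a * v3 b.
Definition cross (a b : vec) : vec :=
  mkV (v2 a * v3 b - v3 a * v2 b) (v3 a * v1 b - v1 a * v3 b) (v1 a * v2 b - v2 a * v1 b).

Definition is_derive_v (F : R -> vec) (t : R) (V : vec) : Prop :=
  is_derive (fun u => v1 (F u)) t (v1 V) /\
  is_derive (fun u => v2 (F u)) t (v2 V) /\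
  is_derive (fun u => v3 (F u)) t (v3 V).

Definition is_open_interval (I : R -> Prop) : Prop :=
  (exists x, I x) /\
  (forall x y z, I x -> I z -> x <= y <= z -> I y) /\
  (forall x, I x -> exists e, 0 < e /\ forall y, Rabs (y - x) < e -> I y).

Definition pos_orthonormal (T N B : vec) : Prop :=
  dot T T = 1 /\ dot N N = 1 /\ dot B B = 1 /\
  dot T N = 0 /\ dot T B = 0 /\ dot N B = 0 /\ B = cross T N.

Definition frenet (D : R -> Prop) (c T N B : R -> vec) (k t : R -> R) : Prop :=
  forall s, D s ->
    is_derive_v c s (T s) /\
    is_derive_v T s (vscal (k s) (N s)) /\
    is_derive_v N s (vadd (vscal (- k s) (T s)) (vscal (t s) (B s))) /\
    is_derive_v B s (vscal (- t s) (N s)) /\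
    0 < k s /\
    pos_orthonormal (T s) (N s) (B s).

Definition pow32 (x : R) : R := sqrt x ^ 3.

From Stdlib Require Import Reals Lra.
From Coquelicot Require Import Coquelicot.
Open Scope R_scope.

(* Along alpha, the Frenet frame of the tangent indicatrix is T_T = N,
   N_T = (-kappa T + tau B) / w and B_T = (tau T + kappa B) / w, where
   w = sqrt (kappa^2 + tau^2); hence kappa_T = w / kappa, and differentiating
   B_T . T = tau / w gives tau_T = w sigma / kappa.  For a Mannheim-direction
   curve, N_beta = B_T forces z = 0, and the Frenet equations of beta give
   x' = kappa_T y, y' = - kappa_T x, kappa_beta = tau_T y, tau_beta = tau_T x.
   So tau_beta / kappa_beta = x / y = tan psi with psi = atan (x / y), whose
   derivative is kappa_T in s_T, i.e. kappa kappa_T = w in s; and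
   (x / y)' = kappa_T / y^2 turns the left-hand side of the second identity into
   kappa_T / |tau_T| = +- 1 / sigma. *)

Lemma vec_eq a b : v1 a = v1 b -> v2 a = v2 b -> v3 a = v3 b -> a = b.
Proof. destruct a, b; simpl; intros -> -> ->; reflexivity. Qed.

Lemma vscal_inj k a b : k <> 0 -> vscal k a = vscal k b -> a = b.
Proof.
  intros Hk E.
  apply vec_eq; [apply (f_equal v1) in E | apply (f_equal v2) in E | apply (f_equal v3) in E];
    simpl in E; now apply Rmult_eq_reg_l with k.
Qed.

Lemma dot_comm a b : dot a b = dot b a.
Proof. unfold dot; ring. Qed.

Lemma dot_vscall k a b : dot (vscal k a) b = k * dot a b.
Proof. unfold dot; simpl; ring. Qed.

Lemma dot_vscalr k a b : dot a (vscal k b) = k * dot a b.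
Proof. unfold dot; simpl; ring. Qed.

Lemma dot_vaddr a b c : dot a (vadd b c) = dot a b + dot a c.
Proof. unfold dot; simpl; ring. Qed.

Lemma cross_crossr a b c : cross a (cross b c) = vadd (vscal (dot a c) b) (vscal (- dot a b) c).
Proof. apply vec_eq; unfold cross, dot; simpl; ring. Qed.

Lemma cross_crossl a b c : cross (cross a b) c = vadd (vscal (dot a c) b) (vscal (- dot b c) a).
Proof. apply vec_eq; unfold cross, dot; simpl; ring. Qed.

Definition frame_comb (a b c : R) (T N B : vec) : vec :=
  vadd (vadd (vscal a T) (vscal b N)) (vscal c B).

Lemma vscal_frame_comb k a b c T N B :
  vscal k (frame_comb a b c T N B) = frame_comb (k * a) (k * b) (k * c) T N B.
Proof. apply vec_eq; unfold frame_comb; simpl; ring. Qed.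

Lemma dot_frame_comb a b c T N B V :
  dot (frame_comb a b c T N B) V = a * dot T V + b * dot N V + c * dot B V.
Proof. unfold frame_comb, dot; simpl; ring. Qed.

Section OrthonormalFrame.

Variables T N B : vec.
Hypothesis HF : pos_orthonormal T N B.

Lemma frame_comb_dot_T a b c : dot (frame_comb a b c T N B) T = a.
Proof.
  destruct HF as (HTT & _ & _ & HTN & HTB & _).
  rewrite dot_frame_comb, (dot_comm N), (dot_comm B), HTT, HTN, HTB; ring.
Qed.

Lemma frame_comb_dot_N a b c : dot (frame_comb a b c T N B) N = b.
Proof.
  destruct HF as (_ & HNN & _ & HTN & _ & HNB & _).
  rewrite dot_frame_comb, (dot_comm B), HNN, HTN, HNB; ring.
Qed.

Lemma frame_comb_dot_B a b c : dot (frame_comb a b c T N B) B = c.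
Proof.
  destruct HF as (_ & _ & HBB & _ & HTB & HNB & _).
  rewrite dot_frame_comb, HBB, HTB, HNB; ring.
Qed.

Lemma frame_comb_norm2 a b c :
  dot (frame_comb a b c T N B) (frame_comb a b c T N B) = a ^ 2 + b ^ 2 + c ^ 2.
Proof.
  rewrite dot_frame_comb, (dot_comm T), (dot_comm N), (dot_comm B).
  rewrite frame_comb_dot_T, frame_comb_dot_N, frame_comb_dot_B; ring.
Qed.

Lemma cross_N_B : cross N B = T.
Proof.
  destruct HF as (_ & HNN & _ & HTN & _ & _ & ->).
  rewrite cross_crossr, HNN, (dot_comm N T), HTN.
  apply vec_eq; simpl; ring.
Qed.

Lemma cross_B_T : cross B T = N.
Proof.
  destruct HF as (HTT & _ & _ & HTN & _ & _ & ->).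
  rewrite cross_crossl, HTT, (dot_comm N T), HTN.
  apply vec_eq; simpl; ring.
Qed.

Lemma cross_frame_comb a b c a' b' c' :
  cross (frame_comb a b c T N B) (frame_comb a' b' c' T N B) =
  frame_comb (b * c' - c * b') (c * a' - a * c') (a * b' - b * a') T N B.
Proof.
  transitivity (frame_comb (b * c' - c * b') (c * a' - a * c') (a * b' - b * a')
                  (cross N B) (cross B T) (cross T N)).
  - apply vec_eq; unfold frame_comb, cross; simpl; ring.
  - destruct HF as (_ & _ & _ & _ & _ & _ & HB).
    now rewrite cross_N_B, cross_B_T, HB.
Qed.

Lemma cross_N_frame_comb a b c :
  cross N (frame_comb a b c T N B) = frame_comb c 0 (- a) T N B.
Proof.
  replace N with (frame_comb 0 1 0 T N B) at 1 by (apply vec_eq; unfold frame_comb; simpl; ring).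
  rewrite cross_frame_comb; f_equal; ring.
Qed.

Lemma cross_frame_comb_B a b c :
  cross (frame_comb a b c T N B) B = frame_comb b (- a) 0 T N B.
Proof.
  replace B with (frame_comb 0 0 1 T N B) at 2 by (apply vec_eq; unfold frame_comb; simpl; ring).
  rewrite cross_frame_comb; f_equal; ring.
Qed.

End OrthonormalFrame.

Lemma locally_open_interval (I P : R -> Prop) s :
  is_open_interval I -> I s -> (forall r, I r -> P r) -> locally s P.
Proof.
  intros (_ & _ & Hopen) Hs HP.
  destruct (Hopen s Hs) as (e & He & Hball).
  exists (mkposreal e He); intros r Hr; exact (HP r (Hball r Hr)).
Qed.

Lemma is_derive_unique_val (f : R -> R) s l l' : is_derive f s l -> is_derive f s l' -> l = l'.
Proof. intros H H'; apply is_derive_unique in H, H'; congruence. Qed.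

Lemma is_derive_loc_zero (f : R -> R) s l :
  locally s (fun r => f r = 0) -> is_derive f s l -> l = 0.
Proof.
  intros Hf Hl.
  assert (H0 : is_derive f s 0).
  { apply is_derive_ext_loc with (fun _ => 0); [|apply (is_derive_const 0)].
    apply filter_imp with (2 := Hf); intros r Hr; now rewrite Hr. }
  exact (is_derive_unique_val _ _ _ _ Hl H0).
Qed.

Lemma is_derive_v_unique F s V W : is_derive_v F s V -> is_derive_v F s W -> V = W.
Proof.
  intros (H1 & H2 & H3) (K1 & K2 & K3).
  apply vec_eq; eapply is_derive_unique_val; eassumption.
Qed.

Lemma is_derive_v_ext_loc F G s V :
  locally s (fun r => F r = G r) -> is_derive_v F s V -> is_derive_v G s V.
Proof.
  intros HFG (H1 & H2 & H3).
  split; [|split]; (eapply is_derive_ext_loc; [|eassumption]);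
    apply filter_imp with (2 := HFG); intros r Hr; now rewrite Hr.
Qed.

Lemma is_derive_v_comp F g s V dg :
  is_derive_v F (g s) V -> is_derive g s dg -> is_derive_v (fun r => F (g r)) s (vscal dg V).
Proof.
  intros (H1 & H2 & H3) Hg.
  split; [|split]; simpl;
    [exact (is_derive_comp _ _ _ _ _ H1 Hg) | exact (is_derive_comp _ _ _ _ _ H2 Hg)
    | exact (is_derive_comp _ _ _ _ _ H3 Hg)].
Qed.

Lemma is_derive_dot F G s F' G' :
  is_derive_v F s F' -> is_derive_v G s G' ->
  is_derive (fun r => dot (F r) (G r)) s (dot F' (G s) + dot (F s) G').
Proof.
  intros (F1 & F2 & F3) (G1 & G2 & G3).
  pose proof (is_derive_plus _ _ _ _ _
    (is_derive_plus _ _ _ _ _ (is_derive_mult _ _ _ _ _ F1 G1 Rmult_comm)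
                              (is_derive_mult _ _ _ _ _ F2 G2 Rmult_comm))
    (is_derive_mult _ _ _ _ _ F3 G3 Rmult_comm)) as H.
  unfold plus, mult in H; simpl in H.
  replace (dot F' (G s) + dot (F s) G') with
    (v1 F' * v1 (G s) + v1 (F s) * v1 G' + (v2 F' * v2 (G s) + v2 (F s) * v2 G')
     + (v3 F' * v3 (G s) + v3 (F s) * v3 G')) by (unfold dot; ring).
  exact H.
Qed.

Section FrenetFrame.

Context {D : R -> Prop} {c T N B : R -> vec} {k t : R -> R}.
Hypothesis Hf : frenet D c T N B k t.

Lemma frenet_tangent_derive s : D s -> is_derive_v c s (T s).
Proof. intros Ds; apply (Hf s Ds). Qed.

Lemma frenet_T_derive s : D s -> is_derive_v T s (vscal (k s) (N s)).
Proof. intros Ds; apply (Hf s Ds). Qed.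

Lemma frenet_N_derive s : D s -> is_derive_v N s (vadd (vscal (- k s) (T s)) (vscal (t s) (B s))).
Proof. intros Ds; apply (Hf s Ds). Qed.

Lemma frenet_B_derive s : D s -> is_derive_v B s (vscal (- t s) (N s)).
Proof. intros Ds; apply (Hf s Ds). Qed.

Lemma frenet_curvature_pos s : D s -> 0 < k s.
Proof. intros Ds; apply (Hf s Ds). Qed.

Lemma frenet_orthonormal s : D s -> pos_orthonormal (T s) (N s) (B s).
Proof. intros Ds; apply (Hf s Ds). Qed.

Lemma is_derive_dot_T V V' s : D s -> is_derive_v V s V' ->
  is_derive (fun r => dot (V r) (T r)) s (dot V' (T s) + k s * dot (V s) (N s)).
Proof.
  intros Ds HV.
  pose proof (is_derive_dot _ _ _ _ _ HV (frenet_T_derive s Ds)) as H.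
  now rewrite dot_vscalr in H.
Qed.

Lemma is_derive_dot_N V V' s : D s -> is_derive_v V s V' ->
  is_derive (fun r => dot (V r) (N r)) s
    (dot V' (N s) - k s * dot (V s) (T s) + t s * dot (V s) (B s)).
Proof.
  intros Ds HV.
  pose proof (is_derive_dot _ _ _ _ _ HV (frenet_N_derive s Ds)) as H.
  rewrite dot_vaddr, !dot_vscalr in H.
  replace (dot V' (N s) - k s * dot (V s) (T s) + t s * dot (V s) (B s))
    with (dot V' (N s) + (- k s * dot (V s) (T s) + t s * dot (V s) (B s))) by ring.
  exact H.
Qed.

Lemma is_derive_dot_B V V' s : D s -> is_derive_v V s V' ->
  is_derive (fun r => dot (V r) (B r)) s (dot V' (B s) - t s * dot (V s) (N s)).
Proof.
  intros Ds HV.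
  pose proof (is_derive_dot _ _ _ _ _ HV (frenet_B_derive s Ds)) as H.
  rewrite dot_vscalr in H.
  replace (dot V' (B s) - t s * dot (V s) (N s))
    with (dot V' (B s) + - t s * dot (V s) (N s)) by ring.
  exact H.
Qed.

End FrenetFrame.

Lemma pow32_sqr a : pow32 (a ^ 2) = Rabs a ^ 3.
Proof. unfold pow32; rewrite <- sqrt_Rsqr_abs, Rsqr_pow2; reflexivity. Qed.

Lemma is_derive_div_speed (k t : R -> R) s :
  k s <> 0 -> ex_derive k s -> ex_derive t s ->
  is_derive (fun r => t r / sqrt (k r ^ 2 + t r ^ 2)) s
    (k s * (k s ^ 2 / pow32 (k s ^ 2 + t s ^ 2) * Derive (fun r => t r / k r) s)).
Proof.
  intros Hk Dk Dt.
  pose proof (Derive_correct _ _ Dk) as Hdk.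
  pose proof (Derive_correct _ _ Dt) as Hdt.
  rewrite (is_derive_unique _ _ _ (is_derive_div _ _ _ _ _ Hdt Hdk Hk)).
  assert (Hpos : 0 < k s ^ 2 + t s ^ 2) by nra.
  auto_derive;
    replace (k s * (k s * 1) + t s * (t s * 1)) with (k s ^ 2 + t s ^ 2) by ring.
  - repeat split; auto.
    apply Rgt_not_eq, sqrt_lt_R0, Hpos.
  - unfold pow32.
    assert (Hw : 0 < sqrt (k s ^ 2 + t s ^ 2)) by (apply sqrt_lt_R0, Hpos).
    pose proof (pow2_sqrt _ (Rlt_le _ _ Hpos)) as Hw2.
    set (w := sqrt (k s ^ 2 + t s ^ 2)) in *.
    change (fun r => t r) with t; change (fun r => k r) with k.
    field_simplify; [|lra..].
    rewrite Hw2; field; lra.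
Qed.

Section MannheimDirection.

Context {J : R -> Prop} {alphaT TT NT BT : R -> vec} {kappaT tauT : R -> R}.
Context {x y z : R -> R} {beta Nb Bb : R -> vec} {kappab taub : R -> R}.
Hypothesis HJ : is_open_interval J.
Hypothesis FT : frenet J alphaT TT NT BT kappaT tauT.
Hypothesis Fb : frenet J beta (fun u => frame_comb (x u) (y u) (z u) (TT u) (NT u) (BT u))
                  Nb Bb kappab taub.
Hypothesis HM : forall u, J u -> Nb u = BT u.

Let frame_T u : J u -> pos_orthonormal (TT u) (NT u) (BT u) := frenet_orthonormal FT u.
Local Hint Resolve frame_T : core.

Local Notation X u := (frame_comb (x u) (y u) (z u) (TT u) (NT u) (BT u)).

Lemma mannheim_z_eq0 u : J u -> z u = 0.
Proof.
  intros Ju.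
  destruct (frenet_orthonormal Fb u Ju) as (_ & _ & _ & HXN & _).
  rewrite HM, frame_comb_dot_B in HXN by auto.
  exact HXN.
Qed.

Lemma mannheim_x_derive u : J u -> is_derive x u (kappaT u * y u).
Proof.
  intros Ju.
  apply is_derive_ext_loc with (fun v => dot (X v) (TT v)).
  { apply (locally_open_interval J); auto; intros v Jv.
    apply frame_comb_dot_T, (frame_T v Jv). }
  pose proof (is_derive_dot_T FT _ _ u Ju (frenet_T_derive Fb u Ju)) as H.
  destruct (frame_T u Ju) as (_ & _ & _ & _ & HTB & _).
  rewrite HM, dot_vscall, dot_comm, HTB, frame_comb_dot_N in H by auto.
  replace (kappaT u * y u) with (kappab u * 0 + kappaT u * y u) by ring.
  exact H.
Qed.

Lemma mannheim_y_derive u : J u -> is_derive y u (- kappaT u * x u).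
Proof.
  intros Ju.
  apply is_derive_ext_loc with (fun v => dot (X v) (NT v)).
  { apply (locally_open_interval J); auto; intros v Jv.
    apply frame_comb_dot_N, (frame_T v Jv). }
  pose proof (is_derive_dot_N FT _ _ u Ju (frenet_T_derive Fb u Ju)) as H.
  rewrite HM, dot_vscall, frame_comb_dot_T, frame_comb_dot_B, mannheim_z_eq0 in H by auto.
  destruct (frame_T u Ju) as (_ & _ & _ & _ & _ & HNB & _).
  rewrite dot_comm, HNB in H.
  replace (- kappaT u * x u) with (kappab u * 0 - kappaT u * x u + tauT u * 0) by ring.
  exact H.
Qed.

Lemma mannheim_curvature u : J u -> kappab u = tauT u * y u.
Proof.
  intros Ju.
  pose proof (is_derive_dot_B FT _ _ u Ju (frenet_T_derive Fb u Ju)) as H.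
  apply is_derive_loc_zero in H.
  - destruct (frame_T u Ju) as (_ & _ & HBB & _).
    rewrite HM, dot_vscall, HBB, frame_comb_dot_N in H by auto.
    lra.
  - apply (locally_open_interval J); auto; intros v Jv.
    rewrite frame_comb_dot_B by exact (frame_T v Jv).
    exact (mannheim_z_eq0 v Jv).
Qed.

Lemma mannheim_binormal u : J u -> Bb u = frame_comb (y u) (- x u) 0 (TT u) (NT u) (BT u).
Proof.
  intros Ju.
  destruct (frenet_orthonormal Fb u Ju) as (_ & _ & _ & _ & _ & _ & ->).
  rewrite HM by exact Ju.
  exact (cross_frame_comb_B _ _ _ (frame_T u Ju) _ _ _).
Qed.

Lemma mannheim_torsion u : J u -> taub u = tauT u * x u.
Proof.
  intros Ju.
  pose proof (is_derive_dot_B FT _ _ u Ju (frenet_B_derive Fb u Ju)) as H.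
  apply is_derive_loc_zero in H.
  - destruct (frame_T u Ju) as (_ & _ & HBB & _).
    rewrite HM, dot_vscall, HBB, mannheim_binormal, frame_comb_dot_N in H by auto.
    lra.
  - apply (locally_open_interval J); auto; intros v Jv.
    destruct (frenet_orthonormal Fb v Jv) as (_ & _ & _ & _ & _ & HNB & _).
    now rewrite dot_comm, <- HM.
Qed.

Lemma mannheim_circle u : J u -> x u ^ 2 + y u ^ 2 = 1.
Proof.
  intros Ju.
  destruct (frenet_orthonormal Fb u Ju) as (HXX & _).
  rewrite frame_comb_norm2, mannheim_z_eq0 in HXX by auto.
  rewrite <- HXX; ring.
Qed.

Lemma mannheim_tauT_y_pos u : J u -> 0 < tauT u * y u.
Proof. intros Ju; rewrite <- mannheim_curvature by exact Ju; exact (frenet_curvature_pos Fb u Ju). Qed.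

Lemma mannheim_y_neq0 u : J u -> y u <> 0.
Proof. intros Ju Hy; pose proof (mannheim_tauT_y_pos u Ju) as H; rewrite Hy in H; lra. Qed.

Lemma mannheim_tauT_neq0 u : J u -> tauT u <> 0.
Proof. intros Ju Ht; pose proof (mannheim_tauT_y_pos u Ju) as H; rewrite Ht in H; lra. Qed.

Lemma mannheim_ratio u : J u -> taub u / kappab u = x u / y u.
Proof.
  intros Ju.
  rewrite mannheim_torsion, mannheim_curvature by exact Ju.
  field; split; [exact (mannheim_y_neq0 u Ju) | exact (mannheim_tauT_neq0 u Ju)].
Qed.

Lemma is_derive_xy_ratio u : J u -> is_derive (fun v => x v / y v) u (kappaT u / y u ^ 2).
Proof.
  intros Ju.
  pose proof (is_derive_div _ _ _ _ _ (mannheim_x_derive u Ju) (mannheim_y_derive u Ju)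
                (mannheim_y_neq0 u Ju)) as H.
  replace (kappaT u / y u ^ 2) with
    ((kappaT u * y u * y u - x u * (- kappaT u * x u)) / y u ^ 2); [exact H|].
  transitivity (kappaT u * (x u ^ 2 + y u ^ 2) / y u ^ 2); [field; exact (mannheim_y_neq0 u Ju)|].
  now rewrite mannheim_circle, Rmult_1_r.
Qed.

Lemma is_derive_mannheim_ratio u : J u ->
  is_derive (fun v => taub v / kappab v) u (kappaT u / y u ^ 2).
Proof.
  intros Ju.
  apply is_derive_ext_loc with (fun v => x v / y v); [|exact (is_derive_xy_ratio u Ju)].
  apply (locally_open_interval J); auto; intros v Jv.
  symmetry; exact (mannheim_ratio v Jv).
Qed.

Lemma is_derive_atan_xy_ratio u : J u ->
  is_derive (fun v => atan (x v / y v)) u (kappaT u).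
Proof.
  intros Ju.
  pose proof (is_derive_comp _ _ _ _ _ (is_derive_atan _) (is_derive_xy_ratio u Ju)) as H.
  pose proof (mannheim_y_neq0 u Ju) as Hy.
  assert (E : 1 + (x u / y u)² = / y u ^ 2).
  { replace (/ y u ^ 2) with ((x u ^ 2 + y u ^ 2) / y u ^ 2)
      by (rewrite mannheim_circle by exact Ju; field; exact Hy).
    unfold Rsqr; field; exact Hy. }
  replace (kappaT u) with (scal (kappaT u / y u ^ 2) (/ (1 + (x u / y u)²))); [exact H|].
  rewrite E; unfold scal; simpl; unfold mult; simpl.
  field; exact Hy.
Qed.

Lemma mannheim_sigma u : J u ->
  kappab u ^ 2 / pow32 (kappab u ^ 2 + taub u ^ 2) * (kappaT u / y u ^ 2) =
  kappaT u / Rabs (tauT u).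
Proof.
  intros Ju.
  pose proof (mannheim_y_neq0 u Ju) as Hy.
  pose proof (Rabs_no_R0 _ (mannheim_tauT_neq0 u Ju)) as Ht.
  rewrite mannheim_curvature, mannheim_torsion by exact Ju.
  replace ((tauT u * y u) ^ 2 + (tauT u * x u) ^ 2) with (tauT u ^ 2)
    by (rewrite <- (Rmult_1_r (tauT u ^ 2)), <- (mannheim_circle u Ju); ring).
  replace ((tauT u * y u) ^ 2) with (Rabs (tauT u) ^ 2 * y u ^ 2) by (rewrite pow2_abs; ring).
  rewrite pow32_sqr.
  field; split; assumption.
Qed.

End MannheimDirection.

Section TangentIndicatrix.

Context {I J : R -> Prop} {alpha T N B : R -> vec} {kappa tau : R -> R} {sT : R -> R}.
Context {alphaT TT NT BT : R -> vec} {kappaT tauT : R -> R}.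
Hypothesis HI : is_open_interval I.
Hypothesis Fa : frenet I alpha T N B kappa tau.
Hypothesis Hkt : forall s, I s -> ex_derive kappa s /\ ex_derive tau s.
Hypothesis HsT : forall s, I s -> J (sT s) /\ is_derive sT s (kappa s).
Hypothesis Hind : forall s, I s -> alphaT (sT s) = T s.
Hypothesis FT : frenet J alphaT TT NT BT kappaT tauT.

Local Notation w s := (sqrt (kappa s ^ 2 + tau s ^ 2)).
Local Notation sigma s :=
  (kappa s ^ 2 / pow32 (kappa s ^ 2 + tau s ^ 2) * Derive (fun r => tau r / kappa r) s).

Let frame_a s : I s -> pos_orthonormal (T s) (N s) (B s) := frenet_orthonormal Fa s.
Local Hint Resolve frame_a : core.

Lemma speed_pos s : I s -> 0 < w s.
Proof. intros Is; pose proof (frenet_curvature_pos Fa s Is); apply sqrt_lt_R0; nra. Qed.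

Lemma indicatrix_tangent s : I s -> TT (sT s) = N s.
Proof.
  intros Is; destruct (HsT s Is) as [Js dsT].
  apply vscal_inj with (kappa s); [apply Rgt_not_eq, (frenet_curvature_pos Fa s Is)|].
  apply is_derive_v_unique with T s; [|exact (frenet_T_derive Fa s Is)].
  apply is_derive_v_ext_loc with (fun r => alphaT (sT r)).
  - apply (locally_open_interval I); auto.
  - exact (is_derive_v_comp _ _ _ _ _ (frenet_tangent_derive FT _ Js) dsT).
Qed.

Lemma indicatrix_normal_scaled s : I s ->
  vscal (kappa s * kappaT (sT s)) (NT (sT s)) = frame_comb (- kappa s) 0 (tau s) (T s) (N s) (B s).
Proof.
  intros Is; destruct (HsT s Is) as [Js dsT].
  transitivity (vscal (kappa s) (vscal (kappaT (sT s)) (NT (sT s)))); [apply vec_eq; simpl; ring|].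
  transitivity (vadd (vscal (- kappa s) (T s)) (vscal (tau s) (B s)));
    [|apply vec_eq; unfold frame_comb; simpl; ring].
  apply is_derive_v_unique with N s; [|exact (frenet_N_derive Fa s Is)].
  apply is_derive_v_ext_loc with (fun r => TT (sT r)).
  - apply (locally_open_interval I); auto; exact indicatrix_tangent.
  - exact (is_derive_v_comp _ _ _ _ _ (frenet_T_derive FT _ Js) dsT).
Qed.

Lemma indicatrix_curvature s : I s -> kappa s * kappaT (sT s) = w s.
Proof.
  intros Is; destruct (HsT s Is) as [Js _].
  pose proof (f_equal (fun v => dot v v) (indicatrix_normal_scaled s Is)) as H; simpl in H.
  destruct (frenet_orthonormal FT _ Js) as (_ & HNN & _).
  rewrite dot_vscall, dot_vscalr, HNN, frame_comb_norm2 in H by auto.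
  rewrite <- (sqrt_pow2 (kappa s * kappaT (sT s))).
  - f_equal; transitivity ((- kappa s) ^ 2 + 0 ^ 2 + tau s ^ 2); [rewrite <- H|]; ring.
  - pose proof (frenet_curvature_pos Fa s Is); pose proof (frenet_curvature_pos FT _ Js); nra.
Qed.

Lemma indicatrix_normal s : I s ->
  NT (sT s) = frame_comb (- kappa s / w s) 0 (tau s / w s) (T s) (N s) (B s).
Proof.
  intros Is; pose proof (speed_pos s Is).
  apply vscal_inj with (w s); [lra|].
  rewrite <- (indicatrix_curvature s Is) at 1; rewrite indicatrix_normal_scaled by exact Is.
  rewrite vscal_frame_comb; f_equal; field; lra.
Qed.

Lemma indicatrix_binormal s : I s ->
  BT (sT s) = frame_comb (tau s / w s) 0 (kappa s / w s) (T s) (N s) (B s).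
Proof.
  intros Is; destruct (HsT s Is) as [Js _].
  destruct (frenet_orthonormal FT _ Js) as (_ & _ & _ & _ & _ & _ & ->).
  rewrite indicatrix_tangent, indicatrix_normal, cross_N_frame_comb by auto.
  f_equal; unfold Rdiv; ring.
Qed.

Lemma indicatrix_torsion s : I s -> kappa s * tauT (sT s) = w s * sigma s.
Proof.
  intros Is; destruct (HsT s Is) as [Js dsT]; destruct (Hkt s Is) as [Dk Dt].
  pose proof (frenet_curvature_pos Fa s Is) as Hk; pose proof (speed_pos s Is) as Hw.
  pose proof (is_derive_dot_T Fa _ _ s Is
                (is_derive_v_comp _ _ _ _ _ (frenet_B_derive FT _ Js) dsT)) as H.
  apply is_derive_ext_loc with (g := fun r => tau r / w r) in H.
  2: { apply (locally_open_interval I); auto; intros r Ir.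
       rewrite indicatrix_binormal, frame_comb_dot_T by auto; reflexivity. }
  pose proof (is_derive_div_speed kappa tau s (Rgt_not_eq _ _ Hk) Dk Dt) as H'.
  pose proof (is_derive_unique_val _ _ _ _ H H') as E.
  rewrite !dot_vscall, indicatrix_normal, frame_comb_dot_T, indicatrix_binormal,
    frame_comb_dot_N in E by auto.
  apply Rmult_eq_reg_l with (kappa s); [|lra].
  replace (kappa s * (w s * sigma s)) with (w s * (kappa s * sigma s)) by ring.
  rewrite <- E; field; lra.
Qed.

Lemma indicatrix_curvature_torsion_ratio s : I s -> tauT (sT s) <> 0 ->
  kappaT (sT s) / tauT (sT s) = 1 / sigma s.
Proof.
  intros Is Ht.
  pose proof (frenet_curvature_pos Fa s Is) as Hk; pose proof (speed_pos s Is) as Hw.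
  pose proof (indicatrix_torsion s Is) as Htor.
  set (sg := sigma s) in *.
  assert (Hsigma : sg <> 0).
  { intros H0; rewrite H0, Rmult_0_r in Htor; apply Ht; nra. }
  replace (kappaT (sT s) / tauT (sT s))
    with (kappa s * kappaT (sT s) / (kappa s * tauT (sT s))) by (field; lra).
  rewrite indicatrix_curvature, Htor by exact Is.
  field; lra.
Qed.

End TangentIndicatrix.

Theorem corollary6p6
  (I J : R -> Prop)
  (alpha T N B : R -> vec) (kappa tau : R -> R)
  (sT : R -> R)
  (alphaT TT NT BT : R -> vec) (kappaT tauT : R -> R)
  (x y z : R -> R)
  (beta Nb Bb : R -> vec) (kappab taub : R -> R) :
  is_open_interval I -> is_open_interval J ->
  (* alpha : unit-speed Frenet curve, arc length s in I *)
  frenet I alpha T N B kappa tau ->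
  (forall s, I s -> ex_derive kappa s /\ ex_derive tau s) ->
  (* s_T = \int kappa ds maps I onto J *)
  (forall s, I s -> J (sT s) /\ is_derive sT s (kappa s)) ->
  (forall u, J u -> exists s, I s /\ sT s = u) ->
  (* the tangent indicatrix alpha_T, parametrized by s_T, with its Frenet apparatus *)
  (forall s, I s -> alphaT (sT s) = T s) ->
  frenet J alphaT TT NT BT kappaT tauT ->
  (* beta : X-direction curve of alpha_T, X = x T_T + y N_T + z B_T *)
  (forall u, J u -> x u ^ 2 + y u ^ 2 + z u ^ 2 = 1) ->
  frenet J beta
    (fun u => vadd (vadd (vscal (x u) (TT u)) (vscal (y u) (NT u))) (vscal (z u) (BT u)))
    Nb Bb kappab taub ->
  (* Mannheim-direction condition *)
  (forall u, J u -> Nb u = BT u) ->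
  (exists psi : R -> R, forall s, I s ->
      is_derive psi s (sqrt (kappa s ^ 2 + tau s ^ 2)) /\
      taub (sT s) / kappab (sT s) = tan (psi s)) /\
  (forall s, I s ->
     let sigma := kappa s ^ 2 / pow32 (kappa s ^ 2 + tau s ^ 2)
                  * Derive (fun r => tau r / kappa r) s in
     exists D, is_derive (fun u => taub u / kappab u) (sT s) D /\
       (kappab (sT s) ^ 2 / pow32 (kappab (sT s) ^ 2 + taub (sT s) ^ 2) * D = 1 / sigma \/
        kappab (sT s) ^ 2 / pow32 (kappab (sT s) ^ 2 + taub (sT s) ^ 2) * D = - (1 / sigma))).
Proof.
  intros HI HJ Fa Hkt HsT _ Hind FT _ Fb HM.
  split.
  - exists (fun r => atan (x (sT r) / y (sT r))).
    intros s Is; destruct (HsT s Is) as [Js dsT]; split.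
    + rewrite <- (indicatrix_curvature HI Fa HsT Hind FT s Is).
      exact (is_derive_comp _ _ _ _ _ (is_derive_atan_xy_ratio HJ FT Fb HM _ Js) dsT).
    + now rewrite (mannheim_ratio HJ FT Fb HM _ Js), tan_atan.
  - intros s Is sigma; destruct (HsT s Is) as [Js _].
    exists (kappaT (sT s) / y (sT s) ^ 2); split.
    + exact (is_derive_mannheim_ratio HJ FT Fb HM _ Js).
    + rewrite (mannheim_sigma HJ FT Fb HM _ Js).
      pose proof (indicatrix_curvature_torsion_ratio HI Fa Hkt HsT Hind FT s Is
                    (mannheim_tauT_neq0 HJ FT Fb HM _ Js)) as Hratio.
      destruct (Rle_or_lt 0 (tauT (sT s))) as [Hpos | Hneg].
      * left; now rewrite Rabs_pos_eq.
      * right; rewrite Rabs_left by exact Hneg.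
        unfold sigma; rewrite <- Hratio; field.
        exact (mannheim_tauT_neq0 HJ FT Fb HM _ Js).
Qed.
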